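(* Let $n>2k$ and $1\le s\le k$. Then $g(n,k,s)=|\mathcal K(n,k,s)|$, where $$\mathcal K(n,k,s)=\Big\{K\in\binom{[n]}{k}:1\in K,\ |K\cap[2,k+s-1]|\ge s-1\Big\}\cup\binom{[2,k+s-1]}{k}.$$
   Context: $[a,b]=\{a,\dots,b\}$. A family is intersecting if any two members intersect. $\tau(\mathcal F)$ is the minimum size of a set meeting every member of $\mathcal F$. Writing sets increasingly, $(a_1,\dots,a_k)\prec(b_1,\dots,b_k)$ iff $a_i\le b_i$ for all $i$; $\mathcal F\subset\binom{[n]}{k}$ is initial if $A\prec B\in\mathcal F$ implies $A\in\mathcal F$. $g(n,k,s)=\max\{|\mathcal F|:\mathcal F\subset\binom{[n]}{k}\text{ intersecting, initial, }\tau(\mathcal F)\ge s\}$. *)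

From mathcomp Require Import all_boot.
Set Implicit Arguments. Unset Strict Implicit. Unset Printing Implicit Defensive.

(* Ground set [n] = {1,...,n} is modelled by 'I_n, the ordinal x standing
   for the integer label x.+1. *)

Definition lab (n : nat) (x : 'I_n) : nat := x.+1.

Definition incr (n : nat) (A : {set 'I_n}) : seq nat :=
  sort leq [seq lab x | x <- enum A].

Definition prec (n : nat) (A B : {set 'I_n}) : bool :=
  all2 leq (incr A) (incr B).

Definition family_k (n k : nat) (F : {set {set 'I_n}}) : bool :=
  [forall A in F, #|A| == k].

Definition intersecting (n : nat) (F : {set {set 'I_n}}) : bool :=
  [forall A in F, forall B in F, A :&: B != set0].

Definition initial (n k : nat) (F : {set {set 'I_n}}) : bool :=
  [forall A : {set 'I_n}, forall B in F, ((#|A| == k) && prec A B) ==> (A \in F)].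

Definition transversal (n : nat) (F : {set {set 'I_n}}) (T : {set 'I_n}) : bool :=
  [forall A in F, T :&: A != set0].

(* tau(F): minimum size of a set meeting every member of F
   (n.+1 plays the role of +infinity if no such set exists) *)
Definition tau (n : nat) (F : {set {set 'I_n}}) : nat :=
  \big[minn/n.+1]_(T : {set 'I_n} | transversal F T) #|T|.

Definition admissible (n k s : nat) (F : {set {set 'I_n}}) : bool :=
  [&& family_k k F, intersecting F, initial k F & s <= tau F].

Definition g (n k s : nat) : nat :=
  \max_(F : {set {set 'I_n}} | admissible k s F) #|F|.

Definition itv (n a b : nat) : {set 'I_n} := [set x : 'I_n | a <= lab x <= b].

Definition Kfam (n k s : nat) : {set {set 'I_n}} :=
  [set K : {set 'I_n} | (#|K| == k) &&
     ((([exists x in K, lab x == 1]) && (s - 1 <= #|K :&: itv n 2 (k + s - 1)|))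
      || (K \subset itv n 2 (k + s - 1)))].

From Pilot Require Import Defs.
From mathcomp Require Import all_boot zify.
Set Implicit Arguments. Unset Strict Implicit. Unset Printing Implicit Defensive.

(* Let F be admissible. Since [1, s - 1] is not a transversal, some member avoids it, and
   by initiality F contains [s, k + s - 1]; shifting this interval into the complement of any
   X shows, as F is intersecting, that every member meets [1, k + s - 1] in at least s
   points. A member X outside K(n, k, s) therefore avoids 1. Let N be the last point with
   |X ∩ [1, N]| = N / 2 and let X' be X with its trace on [1, N] complemented. If X' were in
   F, the sets agreeing with X (resp. X') on [1, N] and continued by the even (resp. odd)
   points of (N, 2k] would be disjoint members of F preceding X and X'. So X' is not in F,
   and one checks X' is in K(n, k, s); hence X |-> X or X' injects F into K(n, k, s), a
   family which is itself admissible. *)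

Section Counting.

Variable n : nat.
Implicit Types (A B C : {set 'I_n}) (P : nat -> bool).

Definition natmem A (i : nat) : bool := [exists v in A, val v == i].

(* The number of elements of A with label at most x, i.e. |A ∩ [1, x]| in the paper. *)
Definition below A (x : nat) : nat := count (natmem A) (iota 0 x).

Lemma natmem_ord A (v : 'I_n) : natmem A v = (v \in A).
Proof.
apply/existsP/idP => [[w /andP[wA /eqP /val_inj <-]] //| vA].
by exists v; rewrite vA eqxx.
Qed.

Lemma natmem_lt A i : natmem A i -> i < n.
Proof. by case/existsP=> v /andP[_ /eqP <-]; apply: ltn_ord. Qed.

Lemma natmem_ge A i : n <= i -> natmem A i = false.
Proof. by move=> ni; case h: (natmem A i) => //; move: (natmem_lt h); rewrite ltnNge ni. Qed.

Lemma natmemE P A : (forall v : 'I_n, (v \in A) = P v) ->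
  forall i, natmem A i = (i < n) && P i.
Proof.
move=> AP i; case: (ltnP i n) => lt; last by rewrite natmem_ge.
by rewrite -[i]/(nat_of_ord (Ordinal lt)) natmem_ord AP.
Qed.

Lemma below0 A : below A 0 = 0.
Proof. by []. Qed.

Lemma belowS A x : below A x.+1 = below A x + natmem A x.
Proof. by rewrite /below -addn1 iotaD count_cat /= addn0. Qed.

Lemma below1 A : below A 1 = natmem A 0.
Proof. by rewrite belowS. Qed.

Lemma below_card A : below A n = #|A|.
Proof.
have -> : #|A| = count (mem A) (enum 'I_n).
  rewrite cardE /enum_mem size_filter; congr count.
  by rewrite /enum_mem [RHS](eq_filter (a2 := predT)) ?filter_predT.
rewrite /below -val_enum_ord count_map.
by apply: eq_count => v /=; rewrite natmem_ord.
Qed.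

Lemma below_ge A x : n <= x -> below A x = #|A|.
Proof.
move=> nx; rewrite -(subnKC nx) /below iotaD count_cat -/(below A n) below_card.
rewrite (@eq_in_count _ _ pred0) ?count_pred0 ?addn0 // => y.
by rewrite mem_iota add0n => /andP[ny _]; rewrite natmem_ge.
Qed.

Lemma below_mono A : {homo below A : x y / x <= y}.
Proof.
move=> x y /subnK <-; elim: (y - x) => [|d IH] //.
by rewrite addSn belowS (leq_trans IH) // leq_addr.
Qed.

Lemma below_le_card A x : below A x <= #|A|.
Proof.
case: (leqP x n) => h; last by rewrite below_ge // ltnW.
by rewrite -below_card below_mono.
Qed.

Lemma below_le A x : below A x <= x.
Proof. by rewrite /below (leq_trans (count_size _ _)) // size_iota. Qed.

Lemma below_setUI A B x :
  below A x + below B x = below (A :|: B) x + below (A :&: B) x.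
Proof.
elim: x => // x IH; rewrite !belowS.
case: (ltnP x n) => h; last by rewrite !natmem_ge //; lia.
rewrite -[x]/(nat_of_ord (Ordinal h)) !natmem_ord !inE.
by case: (_ \in A); case: (_ \in B) => /=; lia.
Qed.

Lemma below_set0 x : below set0 x = 0.
Proof.
have nmem0 i : natmem set0 i = false by rewrite (@natmemE pred0) ?andbF // => v; rewrite inE.
by elim: x => // x IH; rewrite belowS IH nmem0.
Qed.

Lemma below_disjoint A B x : A :&: B = set0 -> below A x + below B x <= x.
Proof. by move=> AB; rewrite below_setUI AB below_set0 addn0 below_le. Qed.

Lemma below_setT x : below setT x = minn x n.
Proof.
elim: x => [|x IH]; first by rewrite min0n.
rewrite belowS IH (@natmemE predT) => [|v]; last by rewrite inE.
rewrite andbT; lia.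
Qed.

Lemma below_setC A x : below (~: A) x = minn x n - below A x.
Proof.
have := below_setUI A (~: A) x.
by rewrite setUCr setICr below_set0 below_setT addn0; lia.
Qed.

Lemma below_interval A C a b :
  (forall i, natmem C i = natmem A i && (a <= i < b)) -> a <= b ->
  forall x, below C x = below A (minn (maxn x a) b) - below A a.
Proof.
move=> CA ab; elim=> [|x IH].
  by rewrite below0 max0n (minn_idPl ab) subnn.
rewrite belowS IH CA.
case: (ltnP x a) => xa.
  have -> : minn (maxn x.+1 a) b = a by lia.
  by rewrite (minn_idPl ab) subnn andbF.
case: (ltnP x b) => xb.
  have -> : minn (maxn x.+1 a) b = x.+1 by lia.
  rewrite belowS !andbT.
  have := below_mono A xa; lia.
have -> : minn (maxn x.+1 a) b = b by lia.
by rewrite !andbF addn0.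
Qed.

End Counting.

Section SortedDomination.

Implicit Types (a b : seq nat) (x y : nat).

Lemma count_leq_small a y x : all (ltn y) a -> x <= y -> count (leq^~ x) a = 0.
Proof.
move=> ya xy; apply/eqP; rewrite -leqn0 leqNgt -has_count; apply/hasPn => t /(allP ya).
by move=> yt; rewrite -ltnNge (leq_ltn_trans xy yt).
Qed.

Lemma count_leqS a x : count (leq^~ x.+1) a = count (leq^~ x) a + count_mem x.+1 a.
Proof.
elim: a => //= t a ->; rewrite leq_eqVlt ltnS.
by case: (t =P x.+1) => [->|_] /=; rewrite ?ltnn; lia.
Qed.

Lemma all2_leq_size a b : all2 leq a b -> size a = size b.
Proof. by elim: a b => [|y a IH] [|z b] //= /andP[_ /IH ->]. Qed.

Lemma all2_leq_count a b : all2 leq a b -> forall x, count (leq^~ x) b <= count (leq^~ x) a.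
Proof.
elim: a b => [|y a IH] [|z b] //= /andP[yz ab] x.
apply: leq_add; last exact: IH.
by case: (leqP z x) => // zx; rewrite (leq_trans yz zx).
Qed.

Lemma count_leq_all2 a b :
  sorted ltn a -> sorted ltn b -> size a = size b ->
  (forall x, count (leq^~ x) b <= count (leq^~ x) a) -> all2 leq a b.
Proof.
elim: a b => [|y a IH] [|z b] //= sa sb [eq_size] le_count.
have ya : all (ltn y) a by apply: (order_path_min ltn_trans sa).
have zb : all (ltn z) b by apply: (order_path_min ltn_trans sb).
have yz : y <= z.
  rewrite leqNgt; apply/negP => zy; have := le_count z.
  by rewrite leqnn (count_leq_small ya (ltnW zy)) (leqNgt y z) zy.
rewrite yz /=; apply: IH => [||//|x]; [exact: path_sorted sa | exact: path_sorted sb |].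
have := le_count x; case: (leqP z x) => zx.
  by rewrite (leq_trans yz zx) !add1n ltnS.
by rewrite (count_leq_small zb (ltnW zx)).
Qed.

End SortedDomination.

Section Shifting.

Variable n : nat.
Implicit Types (A B : {set 'I_n}).

Lemma incr_uniq A : uniq (incr A).
Proof.
rewrite /incr sort_uniq map_inj_uniq ?enum_uniq //.
by move=> u v /succn_inj /val_inj.
Qed.

Lemma incr_sorted A : sorted ltn (incr A).
Proof. by rewrite ltn_sorted_uniq_leq incr_uniq sort_sorted //; exact: leq_total. Qed.

Lemma size_incr A : size (incr A) = #|A|.
Proof. by rewrite /incr size_sort size_map cardE. Qed.

Lemma mem_incr A y : (y \in incr A) = (0 < y) && natmem A y.-1.
Proof.
rewrite /incr mem_sort; apply/mapP/andP => [[v vA ->]|[y0 /existsP[v /andP[vA /eqP vy]]]].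
  by rewrite /lab /= natmem_ord -mem_enum.
by exists v; rewrite ?mem_enum // /lab vy prednK.
Qed.

Lemma count_incr A x : count (leq^~ x) (incr A) = below A x.
Proof.
elim: x => [|x IH].
  apply/eqP; rewrite -leqn0 leqNgt -has_count; apply/hasPn => y.
  by rewrite mem_incr; case: y.
by rewrite count_leqS IH belowS count_uniq_mem ?incr_uniq // mem_incr.
Qed.

Lemma precP A B : prec A B <-> #|A| = #|B| /\ forall x, below B x <= below A x.
Proof.
split => [AB|[eq_card le_below]].
  split; first by rewrite -!size_incr; apply: all2_leq_size.
  by move=> x; rewrite -!count_incr; apply: all2_leq_count.
apply: count_leq_all2; rewrite ?incr_sorted ?size_incr //.
by move=> x; rewrite !count_incr.
Qed.

End Shifting.

Section Families.

Variable n : nat.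
Implicit Types (A B D S X : {set 'I_n}) (F : {set {set 'I_n}}).

Lemma initialP k F A B : initial k F -> #|A| = k -> prec A B -> B \in F -> A \in F.
Proof.
move=> /forallP /(_ A) /forall_inP iF cA AB BF.
by move/implyP: (iF B BF); apply; rewrite cA eqxx.
Qed.

Lemma intersectingP F A B : intersecting F -> A \in F -> B \in F -> A :&: B != set0.
Proof. by move=> /forall_inP iF AF BF; move/forall_inP: (iF A AF); apply. Qed.

Lemma tau_le_card F T : Defs.transversal F T -> tau F <= #|T|.
Proof.
move=> FT; rewrite /tau.
have : T \in index_enum {set 'I_n} by rewrite mem_index_enum.
elim: (index_enum _) => // T' r IH; rewrite inE big_cons.
case/orP => [/eqP <-|/IH le_r]; first by rewrite FT geq_minl.
by case: ifP => // _; rewrite (leq_trans (geq_minr _ _) le_r).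
Qed.

Lemma leq_tau F t :
  t <= n.+1 -> (forall T, Defs.transversal F T -> t <= #|T|) -> t <= tau F.
Proof.
move=> tn tT; rewrite /tau; apply: (big_ind (leq t)) => // x y tx ty.
by rewrite leq_min tx ty.
Qed.

Definition first_elems k S : {set 'I_n} := [set v : 'I_n | (v \in S) && (below S v < k)].

Lemma first_elems_sub k S : first_elems k S \subset S.
Proof. by apply/subsetP => v; rewrite inE => /andP[]. Qed.

Lemma below_first_elems k S x : below (first_elems k S) x = minn k (below S x).
Proof.
have mem_first i : natmem (first_elems k S) i = natmem S i && (below S i < k).
  rewrite (natmemE (P := fun i => natmem S i && (below S i < k))) => [|v]; last first.
    by rewrite inE natmem_ord.
  by case Si: (natmem S i); rewrite ?andbF // (natmem_lt Si).
elim: x => [|x IH]; first by rewrite !below0 minn0.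
by rewrite !belowS IH mem_first; case: (natmem S x) => /=; lia.
Qed.

Lemma card_first_elems k S : k <= #|S| -> #|first_elems k S| = k.
Proof. by move=> kS; rewrite -below_card below_first_elems below_card; lia. Qed.

(* The first k elements of S precede B. *)
Lemma initial_sub k F B S :
  initial k F -> B \in F -> #|B| = k -> (forall x, below B x <= below S x) ->
  exists2 D, D \in F & D \subset S.
Proof.
move=> iF BF cB BS.
have kS : k <= #|S| by rewrite -cB -below_card -(below_card S).
exists (first_elems k S); last exact: first_elems_sub.
apply: (initialP iF (card_first_elems kS) _ BF).
apply/precP; split; first by rewrite card_first_elems // cB.
move=> x; rewrite below_first_elems; have := below_le_card B x; have := BS x; lia.
Qed.

End Families.

Section Intervals.

Variable n : nat.
Implicit Types (A : {set 'I_n}).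

Lemma natmem_setI_itv A a b i :
  natmem (A :&: itv n a b) i = natmem A i && (a.-1 <= i < b).
Proof.
case: (ltnP i n) => lt; last by rewrite !natmem_ge.
rewrite -[i]/(nat_of_ord (Ordinal lt)) !natmem_ord !inE /lab /=.
by congr (_ && (_ && _)); apply/idP/idP; lia.
Qed.

Lemma below_setI_itv A a b x : a.-1 <= b ->
  below (A :&: itv n a b) x = below A (minn (maxn x a.-1) b) - below A a.-1.
Proof. by move=> ab; apply: below_interval => // i; apply: natmem_setI_itv. Qed.

Lemma card_setI_itv A a b : a.-1 <= b -> b <= n ->
  #|A :&: itv n a b| = below A b - below A a.-1.
Proof.
by move=> ab bn; rewrite -below_card below_setI_itv //; congr (below A _ - _); lia.
Qed.

Lemma below_itv a b x : a.-1 <= b -> b <= n ->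
  below (itv n a b) x = minn (maxn x a.-1) b - a.-1.
Proof. by move=> ab bn; rewrite -[itv n a b]setTI below_setI_itv // !below_setT; lia. Qed.

End Intervals.

Section InitialInterval.

Variables n k s : nat.
Hypotheses (s_gt0 : 0 < s) (ks_n : k + s - 1 <= n).
Local Notation m := (k + s - 1).
Implicit Types (X : {set 'I_n}) (F : {set {set 'I_n}}).

Lemma below_itv_ks x : below (itv n s m) x = minn (maxn x (s - 1)) m - (s - 1).
Proof. by rewrite below_itv -?subn1 //; lia. Qed.

Lemma card_itv_ks : #|itv n s m| = k.
Proof. by rewrite -below_card below_itv_ks; lia. Qed.

(* Shift [s, k + s - 1] into the complement of X inside [1, k + s - 1]. *)
Lemma initial_itv_disjoint F X :
  initial k F -> itv n s m \in F -> below X m <= s - 1 ->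
  exists2 D, D \in F & D :&: X = set0.
Proof.
move=> iF itvF hX.
have below_S x : below (~: X :&: itv n 1 m) x = minn x m - below X (minn x m).
  by rewrite below_setI_itv // below_setC /= below0 maxn0; lia.
have [D DF DS] : exists2 D, D \in F & D \subset ~: X :&: itv n 1 m.
  apply: (initial_sub iF itvF card_itv_ks) => x; rewrite below_S below_itv_ks.
  have := below_mono X (geq_minr x m); have := below_le X (minn x m); lia.
exists D => //; apply/setP => v; rewrite !inE.
by case vD: (v \in D) => //=; move: (subsetP DS v vD); rewrite !inE => /andP[/negbTE].
Qed.

End InitialInterval.

Section Flip.

Variable n : nat.
Implicit Types (X : {set 'I_n}).

Definition balance X : nat := \max_(i < n.+1 | 2 * below X i == i) i.

Lemma balanceP X : 2 * below X (balance X) = balance X /\ balance X <= n.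
Proof.
rewrite /balance (bigmax_eq_arg ord0) ?below0 //.
by case: arg_maxnP => [|i /eqP bal _]; rewrite ?below0 // -ltnS ltn_ord.
Qed.

Lemma balance_max X N : N <= n -> 2 * below X N = N -> N <= balance X.
Proof.
move=> Nn bal; rewrite /balance.
have := @leq_bigmax_cond _ (fun i : 'I_n.+1 => 2 * below X i == i) val
  (Ordinal (Nn : N < n.+1)).
by rewrite /= bal eqxx; apply.
Qed.

(* A discrete intermediate value argument: [2 * below X N - N] changes by at most one per
   step and is negative at [N = n]. *)
Lemma balanced_between X N : 2 * #|X| < n -> N <= n -> N <= 2 * below X N ->
  exists2 N', N <= N' <= n & 2 * below X N' = N'.
Proof.
move=> Xn /subnKC; move: (n - N) => d; elim: d N => [|d IH] N Nd le_N.
  by move: le_N; rewrite addn0 in Nd; rewrite Nd below_card; lia.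
case: (ltngtP N (2 * below X N)) => [lt_N|gt_N|eq_N].
- have le_SN : N.+1 <= 2 * below X N.+1 by have := below_mono X (leqnSn N); lia.
  have [N' /andP[NN' N'n] bal] := IH N.+1 (etrans (addSnnS N d) Nd) le_SN.
  by exists N' => //; rewrite (ltnW NN') N'n.
- by move: le_N; rewrite leqNgt gt_N.
- by exists N; rewrite // leqnn -Nd leq_addr.
Qed.

Lemma below_after_balance X x : 2 * #|X| < n -> balance X < x -> x <= n -> 2 * below X x < x.
Proof.
move=> Xn bal_x xn; rewrite ltnNge; apply/negP => le_x.
have [N' /andP[xN' N'n] bal] := balanced_between Xn xn le_x.
by have := balance_max N'n bal; lia.
Qed.

Definition flip X : {set 'I_n} := [set v : 'I_n | (v < balance X) != (v \in X)].

Lemma natmem_flip X i : natmem (flip X) i = (i < n) && ((i < balance X) != natmem X i).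
Proof.
by apply: (natmemE (P := fun i => (i < balance X) != natmem X i)) => v; rewrite inE natmem_ord.
Qed.

Lemma below_flip_le X x : x <= balance X -> below (flip X) x + below X x = x.
Proof.
have [_ bal_n] := balanceP X.
elim: x => // x IH x_bal; rewrite !belowS natmem_flip x_bal (leq_trans x_bal bal_n) /=.
by have := IH (ltnW x_bal); case: (natmem X x) => /=; lia.
Qed.

Lemma below_flip_ge X x : balance X <= x -> below (flip X) x = below X x.
Proof.
have [bal bal_n] := balanceP X.
move=> /subnKC <-; elim: (x - balance X) => [|d IH].
  by rewrite addn0; have := below_flip_le (leqnn (balance X)); lia.
rewrite addnS !belowS IH natmem_flip (ltnNge (balance X + d) (balance X)) leq_addr /=.
by case X_d: (natmem X _); rewrite ?andbF // (natmem_lt X_d).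
Qed.

Lemma balance_flip X : balance (flip X) = balance X.
Proof.
rewrite {1}/balance; apply: eq_bigl => i.
case: (leqP i (balance X)) => i_bal.
  have e := below_flip_le i_bal; have [bal _] := balanceP X.
  by apply/eqP/eqP; lia.
by rewrite below_flip_ge // ltnW.
Qed.

Lemma flipK X : flip (flip X) = X.
Proof.
by apply/setP => v; rewrite inE balance_flip inE; case: (v < _); case: (v \in X).
Qed.

Lemma card_flip X : #|flip X| = #|X|.
Proof. by have [_ bal_n] := balanceP X; rewrite -!below_card below_flip_ge. Qed.

End Flip.

Section Splice.

Variables (n k N : nat).
Hypotheses (kn : 2 * k <= n) (Nk : N <= 2 * k) (N_even : ~~ odd N).
Implicit Types (A : {set 'I_n}).

Definition splice A (p : bool) : {set 'I_n} :=
  [set v : 'I_n | if v < N then v \in A else (v < 2 * k) && (odd v == p)].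

Lemma natmem_splice A p i :
  natmem (splice A p) i =
  (i < n) && (if i < N then natmem A i else (i < 2 * k) && (odd i == p)).
Proof.
apply: (natmemE (P := fun i => if i < N then natmem A i else (i < 2 * k) && (odd i == p))).
by move=> v; rewrite inE natmem_ord.
Qed.

Lemma below_splice_lo A p x : x <= N -> below (splice A p) x = below A x.
Proof.
elim: x => // x IH xN; rewrite !belowS natmem_splice xN IH ?(ltnW xN) //=.
by case A_x: (natmem A x); rewrite ?andbF // (natmem_lt A_x).
Qed.

Lemma below_splice_hi A p d :
  2 * below (splice A p) (N + d) + p * odd (minn (N + d) (2 * k)) =
  2 * below A N + (minn (N + d) (2 * k) - N) + (~~ p) * odd (minn (N + d) (2 * k)).
Proof.
elim: d => [|d IH].
  by rewrite addn0 below_splice_lo //; move: N_even; case: p; lia.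
rewrite addnS belowS natmem_splice (ltnNge (N + d) N) leq_addr /=.
case: (ltnP (N + d) (2 * k)) => lt2k; last by move: IH; lia.
rewrite (leq_trans lt2k kn) /=; move: IH; case: p; lia.
Qed.

End Splice.

Section FlipNotin.

Variables (n k : nat) (F : {set {set 'I_n}}).
Hypotheses (kn : 2 * k < n) (iF : initial k F) (itF : intersecting F).
Implicit Types (X : {set 'I_n}).

Lemma below_after_balance_le X x :
  #|X| = k -> balance X < x -> 2 * below X x <= minn x (2 * k).
Proof.
move=> cX bal_x; have := below_le_card X x; rewrite cX.
case: (leqP x n) => xn; last lia.
have Xn : 2 * #|X| < n by rewrite cX.
by have := below_after_balance Xn bal_x xn; lia.
Qed.

(* The two spliced sets precede [X] and [flip X] respectively, and are disjoint. *)
Lemma flip_notin X : X \in F -> #|X| = k -> flip X \notin F.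
Proof.
move=> XF cX; have [bal bal_n] := balanceP X; set N := balance X in bal bal_n *.
have Nk : N <= 2 * k by have := below_le_card X N; lia.
have N_even : ~~ odd N by rewrite -bal oddM.
have kn' : 2 * k <= n by lia.
pose G := splice k N X true; pose H := splice k N (~: X) false.
have balC : 2 * below (~: X) N = N by rewrite below_setC; lia.
have below_G x : N <= x -> 2 * below G x + odd (minn x (2 * k)) = minn x (2 * k).
  by move=> /subnKC <-; have := below_splice_hi kn' Nk N_even X true (x - N); rewrite /G; lia.
have below_H x : N <= x -> 2 * below H x = minn x (2 * k) + odd (minn x (2 * k)).
  move=> /subnKC <-; have := below_splice_hi kn' Nk N_even (~: X) false (x - N).
  by rewrite /H; lia.
have cG : #|G| = k by rewrite -below_card; have := below_G n (ltnW (leq_ltn_trans Nk kn)); lia.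
have cH : #|H| = k by rewrite -below_card; have := below_H n (ltnW (leq_ltn_trans Nk kn)); lia.
have GX : prec G X.
  apply/precP; split => [|x]; first by rewrite cG cX.
  case: (leqP x N) => xN; first by rewrite below_splice_lo.
  by have := below_after_balance_le cX xN; have := below_G x (ltnW xN); lia.
have HfX : prec H (flip X).
  apply/precP; split => [|x]; first by rewrite cH card_flip cX.
  case: (leqP x N) => xN.
    rewrite below_splice_lo // below_setC; have := below_flip_le xN; lia.
  rewrite below_flip_ge ?(ltnW xN) //.
  by have := below_after_balance_le cX xN; have := below_H x (ltnW xN); lia.
apply/negP => fXF.
have := intersectingP itF (initialP iF cG GX XF) (initialP iF cH HfX fXF).
suff -> : G :&: H = set0 by rewrite eqxx.
apply/setP => v; rewrite /G /H !inE.
by case: (v < N); case: (v \in X); case: (odd v); case: (v < 2 * k).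
Qed.

Lemma balance_gt0 X : X \in F -> #|X| = k -> 0 < balance X.
Proof.
move=> XF cX; rewrite lt0n; apply/negP => /eqP bal0.
have := flip_notin XF cX.
suff -> : flip X = X by rewrite XF.
by apply/setP => v; rewrite inE bal0 ltn0; case: (v \in X).
Qed.

End FlipNotin.

Lemma subset_card_setI (T : finType) (A B : {set T}) : (A \subset B) = (#|A :&: B| == #|A|).
Proof.
apply/idP/eqP => [/setIidPl -> //|eq_card].
by apply/setIidPl/eqP; rewrite eqEcard subsetIl eq_card leqnn.
Qed.

Section Kfam.

Variables (n k s : nat) (F : {set {set 'I_n}}).
Hypotheses (kn : 2 * k < n) (s_gt0 : 0 < s) (sk : s <= k).
Local Notation m := (k + s - 1).
Local Notation K := (Kfam n k s).
Implicit Types (A B T X : {set 'I_n}).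

Let ks_n : m <= n. Proof. lia. Qed.

Lemma KfamE A : (A \in K) = (#|A| == k) &&
  ((natmem A 0 && (s - 1 <= below A m - natmem A 0)) || (below A m - natmem A 0 == #|A|)).
Proof.
have lab1 : [exists x in A, lab x == 1] = natmem A 0.
  by apply: eq_existsb => x; rewrite /lab eqSS.
have m1 : 1 <= m by lia.
by rewrite inE lab1 subset_card_setI card_setI_itv //= [below A 1]below1.
Qed.

Lemma itv_ks_Kfam : itv n s m \in K.
Proof.
have mem0 : natmem (itv n s m) 0 = (s == 1).
  rewrite -[itv n s m]setTI natmem_setI_itv (natmemE (P := predT)) => [|v]; rewrite ?inE //.
  by lia.
rewrite KfamE card_itv_ks // eqxx mem0 below_itv_ks //.
by case: (s =P 1) => [->|_] /=; [lia | apply/eqP; lia].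
Qed.

Lemma Kfam_initial : initial k K.
Proof.
apply/forallP => A; apply/forall_inP => B; rewrite !KfamE => /andP[/eqP cB memB].
apply/implyP => /andP[/eqP cA /precP[_ le_below]].
rewrite cA eqxx /=; have := le_below 1; have := le_below m; rewrite !below1.
have := below_le_card A m; rewrite cA; rewrite cB in memB; move: memB; lia.
Qed.

Lemma Kfam_intersecting : intersecting K.
Proof.
apply/forall_inP => A memA; apply/forall_inP => B memB; apply/negP => /eqP AB.
have := below_disjoint 1 AB; have := below_disjoint m AB; rewrite !below1.
move: memA memB; rewrite !KfamE => /andP[/eqP cA memA] /andP[/eqP cB memB].
have := below_le_card A m; have := below_le_card B m; rewrite cA cB.
have m1 : 1 <= m by lia.
have := below_mono A m1; have := below_mono B m1; rewrite !below1.
by rewrite cA in memA; rewrite cB in memB; move: memA memB; lia.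
Qed.

Lemma Kfam_tau : s <= tau K.
Proof.
apply: leq_tau => [|T KT]; first by lia.
rewrite leqNgt; apply/negP => small_T.
have T_m : below T m <= s - 1 by have := below_le_card T m; lia.
have [D DK DT] := initial_itv_disjoint s_gt0 ks_n Kfam_initial itv_ks_Kfam T_m.
by move/forall_inP: KT => /(_ D DK); rewrite setIC DT eqxx.
Qed.

Lemma Kfam_admissible : admissible k s K.
Proof.
apply/and4P; split; [|exact: Kfam_intersecting|exact: Kfam_initial|exact: Kfam_tau].
by apply/forall_inP => A; rewrite KfamE => /andP[].
Qed.

Hypothesis admF : admissible k s F.

Let cardF X : X \in F -> #|X| = k.
Proof. by case/and4P: admF => /forall_inP cF _ _ _ XF; apply/eqP/cF. Qed.
Let initF : initial k F. Proof. by case/and4P: admF. Qed.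
Let interF : intersecting F. Proof. by case/and4P: admF. Qed.

(* [1, s - 1] is too small to be a transversal, so a member avoids it and shifts to
   [s, k + s - 1]. *)
Lemma itv_ks_in : itv n s m \in F.
Proof.
have below_T x : below (itv n 1 (s - 1)) x = minn x (s - 1) by rewrite below_itv //; lia.
have : ~~ Defs.transversal F (itv n 1 (s - 1)).
  apply/negP => /tau_le_card; rewrite -below_card below_T.
  by case/and4P: admF => _ _ _; lia.
case/forall_inPn => A AF /negPn /eqP A_T.
apply: (initialP initF (card_itv_ks s_gt0 ks_n) _ AF).
apply/precP; split => [|x]; first by rewrite card_itv_ks // cardF.
rewrite below_itv_ks //; have := below_disjoint x A_T; have := below_le_card A x.
by rewrite cardF // below_T; lia.
Qed.

Lemma below_ks_ge X : X \in F -> s <= below X m.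
Proof.
move=> XF; rewrite leqNgt; apply/negP => small_X.
have X_m : below X m <= s - 1 by lia.
have [D DF DX] := initial_itv_disjoint s_gt0 ks_n initF itv_ks_in X_m.
by have := intersectingP interF DF XF; rewrite DX eqxx.
Qed.

Lemma flip_in_Kfam X : X \in F -> X \notin K -> flip X \in K.
Proof.
move=> XF; have cX := cardF XF; have big_X := below_ks_ge XF.
have m1 : 1 <= m by lia.
have := below_le_card X m; have := below_mono X m1; rewrite below1 KfamE cX eqxx /=.
move=> X0 Xm notK.
have X0F : natmem X 0 = false by move: notK; lia.
have bal_gt0 := balance_gt0 kn initF interF XF cX.
have [_ bal_n] := balanceP X.
rewrite KfamE card_flip cX eqxx /= natmem_flip X0F bal_gt0 (leq_trans bal_gt0 bal_n) /=.
case: (leqP m (balance X)) => m_bal; first by have := below_flip_le m_bal; lia.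
by rewrite below_flip_ge ?(ltnW m_bal) //; lia.
Qed.

(* X is kept if it lies in Kfam and flipped otherwise; no flip of a member is a member. *)
Lemma card_le_Kfam : #|F| <= #|K|.
Proof.
pose phi X := if X \in K then X else flip X.
have phi_inj : {in F &, injective phi}.
  move=> X Y XF YF; rewrite /phi.
  have fX := flip_notin kn initF interF XF (cardF XF).
  have fY := flip_notin kn initF interF YF (cardF YF).
  case: ifP => XK; case: ifP => YK => eqXY.
  - exact: eqXY.
  - by move: fY; rewrite -eqXY XF.
  - by move: fX; rewrite eqXY YF.
  - by rewrite -(flipK X) eqXY flipK.
rewrite -(card_in_imset phi_inj); apply/subset_leq_card/subsetP => _ /imsetP[X XF ->].
by rewrite /phi; case: ifP => // /negbT; apply: flip_in_Kfam.
Qed.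

End Kfam.

Theorem mainTheorem19 (n k s : nat) :
  2 * k < n -> 1 <= s -> s <= k -> g n k s = #|Kfam n k s|.
Proof.
move=> kn s_gt0 sk; apply/eqP; rewrite eqn_leq; apply/andP; split.
  by apply/bigmax_leqP => F; apply: card_le_Kfam.
exact: (@leq_bigmax_cond _ (admissible k s) (fun F => #|F|) _ (Kfam_admissible kn s_gt0 sk)).
Qed.
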